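(* Let $\sigma$ be a 2-structure and $X\subsetneq V(\sigma)$ with $\sigma[X]$ prime; write $\overline{X}=V(\sigma)\setminus X$. Suppose Statement (S1) holds, i.e. there is no $v\in\overline{X}$ with $\sigma[X\cup\{v\}]$ prime. Let $M\subseteq\overline{X}$. If $M$ is a module of $\sigma$, then $M$ is a module of the outside graph $\Gamma_{(\sigma,\overline{X})}$, and there exist $B_p\in p_{(\sigma,\overline{X})}$ and $B_q\in q_{(\sigma,\overline{X})}$ such that $M\subseteq B_q\subseteq B_p$ and $M$ is a module of $\sigma[B_p]$.
   Context: A 2-structure $\sigma$ consists of a vertex set $V(\sigma)$ and an equivalence relation $\equiv_\sigma$ on ordered pairs of distinct vertices; $E(\sigma)$ is its set of classes; $\sigma[W]$ is the induced 2-structure on $W$. A module is a set $M$ such that for all $x,y\in M$ and $v\notin M$, $(x,v)\equiv_\sigma(y,v)$ and $(v,x)\equiv_\sigma(v,y)$; $\sigma$ is prime if $|V(\sigma)|\geq3$ and its only modules are $\emptyset$, $V(\sigma)$ and singletons. A graph is viewed as a 2-structure where $(u,v)\equiv(x,y)$ iff both pairs are edges or both non-edges (so a module of a graph is a vertex set $M$ such that each outside vertex is adjacent to all or none of $M$). Given $\sigma[X]$ prime: ${\rm Ext}_\sigma(X)=\{v\in\overline{X}:\sigma[X\cup\{v\}]\text{ prime}\}$; $\langle X\rangle_\sigma=\{v\in\overline{X}: X\text{ is a module of }\sigma[X\cup\{v\}]\}$; for $\alpha\in X$, $X_\sigma(\alpha)=\{v\in\overline{X}:\{\alpha,v\}\text{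 is a module of }\sigma[X\cup\{v\}]\}$. $p_{(\sigma,\overline{X})}$ is the partition of $\overline{X}$ formed by the nonempty sets among ${\rm Ext}_\sigma(X)$, $\langle X\rangle_\sigma$, $X_\sigma(\alpha)$ ($\alpha\in X$). For $e,f\in E(\sigma)$: $\langle X\rangle^{(e,f)}_\sigma=\{v\in\langle X\rangle_\sigma:(v,\alpha)\in e,(\alpha,v)\in f\}$ for any $\alpha\in X$; $X^{(e,f)}_\sigma(\alpha)=\{v\in X_\sigma(\alpha):(v,\alpha)\in e,(\alpha,v)\in f\}$. $q_{(\sigma,\overline{X})}$ is the partition of $\overline{X}$ formed by the nonempty sets among ${\rm Ext}_\sigma(X)$, $\langle X\rangle^{(e,f)}_\sigma$, $X^{(e,f)}_\sigma(\alpha)$ ($e,f\in E(\sigma)$, $\alpha\in X$). The outside graph $\Gamma_{(\sigma,\overline{X})}$ has vertex set $\overline{X}$ and edges the 2-element sets $Y\subseteq\overline{X}$ with $\sigma[X\cup Y]$ prime. *)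

(* A 2-structure sigma is given by a vertex type
   T (V(sigma) = all of T) and a relation R a b c d meaning (a,b) ==_sigma (c,d);
   only its values on pairs of distinct vertices matter, where it must be an
   equivalence relation (see [two_structure]). *)

Definition vset (T : Type) := T -> Prop.

Definition two_structure {T : Type} (R : T -> T -> T -> T -> Prop) : Prop :=
  (forall a b, a <> b -> R a b a b) /\
  (forall a b c d, a <> b -> c <> d -> R a b c d -> R c d a b) /\
  (forall a b c d e f, a <> b -> c <> d -> e <> f ->
      R a b c d -> R c d e f -> R a b e f).

Definition vsubset {T} (A B : vset T) : Prop := forall x, A x -> B x.
Definition vsetU {T} (A B : vset T) : vset T := fun x => A x \/ B x.
Definition vset1 {T} (a : T) : vset T := fun x => x = a.
Definition vset2 {T} (a b : T) : vset T := fun x => x = a \/ x = b.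
Definition vseteq {T} (A B : vset T) : Prop := forall x, A x <-> B x.
Definition vcompl {T} (A : vset T) : vset T := fun x => ~ A x.

Definition is_module {T} (R : T -> T -> T -> T -> Prop) (W M : vset T) : Prop :=
  vsubset M W /\
  forall x y v, M x -> M y -> W v -> ~ M v -> R x v y v /\ R v x v y.

Definition is_prime {T} (R : T -> T -> T -> T -> Prop) (W : vset T) : Prop :=
  (exists a b c, W a /\ W b /\ W c /\ a <> b /\ a <> c /\ b <> c) /\
  forall M, is_module R W M ->
    vseteq M (fun _ => False) \/ vseteq M W \/ exists a, vseteq M (vset1 a).

Definition Ext {T} R (X : vset T) : vset T :=
  fun v => ~ X v /\ is_prime R (vsetU X (vset1 v)).

Definition Inside {T} R (X : vset T) : vset T :=
  fun v => ~ X v /\ is_module R (vsetU X (vset1 v)) X.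

Definition Xalpha {T} R (X : vset T) (alpha : T) : vset T :=
  fun v => ~ X v /\ is_module R (vsetU X (vset1 v)) (vset2 alpha v).

Definition is_class {T} (R : T -> T -> T -> T -> Prop) (e : T -> T -> Prop) : Prop :=
  exists a b, a <> b /\ forall x y, e x y <-> (x <> y /\ R x y a b).

(* <X>^{(e,f)}_sigma  ("for any alpha in X"; read as for every alpha in X) *)
Definition Inside_ef {T} R (X : vset T) (e f : T -> T -> Prop) : vset T :=
  fun v => Inside R X v /\ forall alpha, X alpha -> e v alpha /\ f alpha v.

Definition Xalpha_ef {T} R (X : vset T) (e f : T -> T -> Prop) (alpha : T) : vset T :=
  fun v => Xalpha R X alpha v /\ e v alpha /\ f alpha v.

Definition nonempty {T} (A : vset T) : Prop := exists x, A x.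

Definition in_p {T} R (X : vset T) (B : vset T) : Prop :=
  nonempty B /\
  (vseteq B (Ext R X) \/ vseteq B (Inside R X) \/
   exists alpha, X alpha /\ vseteq B (Xalpha R X alpha)).

Definition in_q {T} R (X : vset T) (B : vset T) : Prop :=
  nonempty B /\
  (vseteq B (Ext R X) \/
   (exists e f, is_class R e /\ is_class R f /\ vseteq B (Inside_ef R X e f)) \/
   (exists e f alpha, is_class R e /\ is_class R f /\ X alpha /\
        vseteq B (Xalpha_ef R X e f alpha))).

Definition outside_edge {T} R (X : vset T) (u w : T) : Prop :=
  ~ X u /\ ~ X w /\ u <> w /\ is_prime R (vsetU X (vset2 u w)).

Definition graph_module {T} R (X : vset T) (M : vset T) : Prop :=
  vsubset M (vcompl X) /\
  forall x y v, M x -> M y -> ~ X v -> ~ M v ->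
    (outside_edge R X x v <-> outside_edge R X y v).

From Stdlib Require Import Classical ClassicalEpsilon FunctionalExtensionality PropExtensionality.

(* If M is a module of sigma, two vertices m, m' of M are seen alike from every
   vertex outside M, so the transposition (m m') is an isomorphism from
   sigma[Y + m] onto sigma[Y + m'] whenever Y misses M.  Taking Y = X shows that
   m and m' fall into the same blocks of p and q: by (S1) every vertex outside X
   lies in <X> or in some X(alpha), and the transposition carries the witnessing
   module and the classes of the pairs (m, alpha), (alpha, m) over to m'.  Taking
   Y = X + v shows that m and m' have the same neighbours v in the outside graph. *)

Lemma vset_ext {T} (A B : vset T) : vseteq A B -> A = B.
Proof.
  intro E. apply functional_extensionality; intro x.
  apply propositional_extensionality, E.
Qed.

Lemma vsetU_vset2 {T} (X : vset T) u w :
  vsetU X (vset2 u w) = vsetU (vsetU X (vset1 w)) (vset1 u).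
Proof. apply vset_ext; intro z; unfold vsetU, vset1, vset2; tauto. Qed.

Definition vpreim {T} (g : T -> T) (A : vset T) : vset T := fun z => A (g z).

Lemma vpreimU {T} (g : T -> T) (A B : vset T) :
  vpreim g (vsetU A B) = vsetU (vpreim g A) (vpreim g B).
Proof. reflexivity. Qed.

Section Involution.

Variables (T : Type) (g : T -> T).
Hypothesis g_involutive : forall z, g (g z) = z.

Lemma involution_eq z w : g z = w <-> z = g w.
Proof. split; [intros <- | intros ->]; auto. Qed.

Lemma involution_inj z w : g z = g w -> z = w.
Proof. intro E. apply involution_eq in E. rewrite g_involutive in E. exact E. Qed.

Lemma vpreim_involutive (A : vset T) : vpreim g (vpreim g A) = A.
Proof. apply vset_ext; intro z; unfold vpreim; rewrite g_involutive; tauto. Qed.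

End Involution.

Definition swap {T} (x y z : T) : T :=
  if excluded_middle_informative (z = x) then y
  else if excluded_middle_informative (z = y) then x else z.

Section Swap.

Variables (T : Type) (x y : T).

Lemma swap_l : swap x y x = y.
Proof. unfold swap. destruct (excluded_middle_informative (x = x)); congruence. Qed.

Lemma swap_r : swap x y y = x.
Proof.
  unfold swap. destruct (excluded_middle_informative (y = x)); auto.
  destruct (excluded_middle_informative (y = y)); congruence.
Qed.

Lemma swap_other z : z <> x -> z <> y -> swap x y z = z.
Proof.
  intros zx zy. unfold swap.
  destruct (excluded_middle_informative (z = x)); try contradiction.
  destruct (excluded_middle_informative (z = y)); congruence.
Qed.

Lemma swap_involutive z : swap x y (swap x y z) = z.
Proof.
  destruct (classic (z = x)) as [->|zx]; [rewrite swap_l; apply swap_r|].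
  destruct (classic (z = y)) as [->|zy]; [rewrite swap_r; apply swap_l|].
  rewrite (swap_other z); auto. apply swap_other; auto.
Qed.

Lemma vpreim_swap_out (A : vset T) : ~ A x -> ~ A y -> vpreim (swap x y) A = A.
Proof.
  intros Ax Ay. apply vset_ext; intro z; unfold vpreim.
  destruct (classic (z = x)) as [->|zx]; [rewrite swap_l; tauto|].
  destruct (classic (z = y)) as [->|zy]; [rewrite swap_r; tauto|].
  rewrite swap_other; tauto.
Qed.

Lemma vpreim_swap1 : vpreim (swap x y) (vset1 x) = vset1 y.
Proof.
  apply vset_ext; intro z; unfold vpreim, vset1.
  rewrite involution_eq, swap_l; [tauto | apply swap_involutive].
Qed.

End Swap.

Section TwoStructure.

Variables (T : Type) (R : T -> T -> T -> T -> Prop).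
Hypothesis HR : two_structure R.

Lemma R_refl a b : a <> b -> R a b a b.
Proof. apply HR. Qed.

Lemma R_sym a b c d : a <> b -> c <> d -> R a b c d -> R c d a b.
Proof. apply HR. Qed.

Lemma R_trans a b c d e f :
  a <> b -> c <> d -> e <> f -> R a b c d -> R c d e f -> R a b e f.
Proof. apply HR. Qed.

Lemma module_restrict (W W' N : vset T) :
  is_module R W N -> vsubset W' W -> is_module R W' (fun z => W' z /\ N z).
Proof.
  intros [_ HN] HW'. split.
  - intros z [W'z _]; exact W'z.
  - intros x y v [_ Nx] [_ Ny] W'v Nv. apply HN; auto.
Qed.

Lemma module_sub (W W' N : vset T) :
  is_module R W N -> vsubset W' W -> vsubset N W' -> is_module R W' N.
Proof.
  intros [_ HN] HW' HNW'. split; [exact HNW'|].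
  intros x y v Nx Ny W'v Nv. apply HN; auto.
Qed.

Definition preserves_classes (g : T -> T) (W : vset T) : Prop :=
  forall p q, W p -> W q -> p <> q -> R p q (g p) (g q).

Section Involution.

Variable g : T -> T.
Hypothesis g_involutive : forall z, g (g z) = z.

Lemma preserves_classes_vpreim W :
  preserves_classes g W -> preserves_classes g (vpreim g W).
Proof.
  intros Hg p q Wp Wq pq.
  assert (gpq : g p <> g q) by (intro E; apply pq, (involution_inj _ g g_involutive); auto).
  pose proof (Hg _ _ Wp Wq gpq) as C. rewrite !g_involutive in C.
  apply R_sym; auto.
Qed.

Lemma module_vpreim W N :
  preserves_classes g W -> is_module R W N -> is_module R (vpreim g W) (vpreim g N).
Proof.
  intros Hg [HNW HN]. split.
  - intros z Nz. exact (HNW _ Nz).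
  - unfold vpreim. intros x y v Nx Ny Wv Nv.
    assert (gxv : g x <> g v) by (intro E; rewrite E in Nx; contradiction).
    assert (gyv : g y <> g v) by (intro E; rewrite E in Ny; contradiction).
    assert (xv : x <> v) by congruence.
    assert (yv : y <> v) by congruence.
    pose proof (Hg _ _ (HNW _ Nx) Wv gxv) as Cx.
    pose proof (Hg _ _ (HNW _ Ny) Wv gyv) as Cy.
    pose proof (Hg _ _ Wv (HNW _ Nx) (not_eq_sym gxv)) as Cx'.
    pose proof (Hg _ _ Wv (HNW _ Ny) (not_eq_sym gyv)) as Cy'.
    rewrite !g_involutive in Cx, Cy, Cx', Cy'.
    destruct (HN _ _ _ Nx Ny Wv Nv) as [Hout Hin]. split.
    + apply R_trans with (g x) (g v); auto using R_sym.
      apply R_trans with (g y) (g v); auto.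
    + apply R_trans with (g v) (g x); auto using R_sym, not_eq_sym.
      apply R_trans with (g v) (g y); auto using not_eq_sym.
Qed.

Lemma prime_vpreim W :
  preserves_classes g W -> is_prime R W -> is_prime R (vpreim g W).
Proof.
  intros Hg [[a [b [c (Wa & Wb & Wc & ab & ac & bc)]]] HW]. split.
  - exists (g a), (g b), (g c). unfold vpreim; rewrite !g_involutive.
    repeat split; auto; intro E; apply (involution_inj _ g g_involutive) in E; auto.
  - intros N HN.
    pose proof (module_vpreim _ _ (preserves_classes_vpreim _ Hg) HN) as HN'.
    rewrite vpreim_involutive in HN' by exact g_involutive.
    destruct (HW _ HN') as [E | [E | [s E]]]; unfold vseteq, vpreim in E.
    + left. intro z. specialize (E (g z)). rewrite g_involutive in E. exact E.
    + right; left. intro z. specialize (E (g z)). rewrite g_involutive in E. exact E.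
    + right; right. exists (g s). intro z. specialize (E (g z)).
      rewrite g_involutive in E. rewrite E. apply involution_eq, g_involutive.
Qed.

End Involution.

Lemma prime_extension (X : vset T) v :
  is_prime R X -> ~ X v -> ~ Inside R X v -> (forall a, X a -> ~ Xalpha R X a v) ->
  is_prime R (vsetU X (vset1 v)).
Proof.
  intros [[a [b [c Habc]]] HX] Xv Hins Hxa. split.
  { exists a, b, c. unfold vsetU. tauto. }
  intros N HN.
  assert (HNz : forall z, N z <-> (X z /\ N z) \/ (z = v /\ N v)).
  { intro z; split.
    - intro Nz. destruct (proj1 HN z Nz) as [Xz | ->]; auto.
    - intros [[_ Nz] | [-> Nv]]; auto. }
  (* N meets X in a module of sigma[X]: the empty set, X or a singleton. *)
  destruct (HX _ (module_restrict _ X N HN (fun z Xz => or_introl Xz)))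
    as [E | [E | [a0 E]]]; destruct (classic (N v)) as [Nv | Nv].
  - right; right; exists v. intro z. specialize (E z); specialize (HNz z).
    unfold vset1; tauto.
  - left. intro z. specialize (E z); specialize (HNz z). tauto.
  - right; left. intro z. specialize (E z); specialize (HNz z).
    unfold vsetU, vset1; tauto.
  - exfalso. apply Hins. split; auto.
    replace X with N at 2 by (apply vset_ext; intro z;
      specialize (E z); specialize (HNz z); tauto).
    exact HN.
  - exfalso. apply (Hxa a0); [apply E; reflexivity|]. split; auto.
    replace (vset2 a0 v) with N by (apply vset_ext; intro z;
      specialize (E z); specialize (HNz z); unfold vset1, vset2 in *; tauto).
    exact HN.
  - right; right; exists a0. intro z. specialize (E z); specialize (HNz z).
    unfold vset1 in *; tauto.
Qed.

Lemma outside_vertex_cases (X : vset T) v :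
  is_prime R X -> ~ X v -> ~ is_prime R (vsetU X (vset1 v)) ->
  Inside R X v \/ exists a, X a /\ Xalpha R X a v.
Proof.
  intros HX Xv Hnp. apply NNPP; intro H. apply Hnp, prime_extension; auto.
  intros a Xa Ha; apply H; eauto.
Qed.

Definition twins (Y : vset T) (m m' : T) : Prop :=
  ~ Y m /\ ~ Y m' /\ forall w, Y w -> R m w m' w /\ R w m w m'.

Lemma twins_refl (Y : vset T) m : ~ Y m -> twins Y m m.
Proof.
  intro Ym. split; [|split]; auto.
  intros w Yw. assert (mw : m <> w) by (intro; subst; contradiction).
  split; apply R_refl; auto.
Qed.

Lemma module_twins (M Y : vset T) x y :
  is_module R (fun _ => True) M -> (forall w, Y w -> ~ M w) -> M x -> M y ->
  twins Y x y.
Proof.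
  intros [_ HM] HYM Mx My. split; [|split].
  - intro Yx; exact (HYM x Yx Mx).
  - intro Yy; exact (HYM y Yy My).
  - intros w Yw. apply HM; auto.
Qed.

Section Twins.

Variables (Y : vset T) (m m' : T).
Hypothesis Htw : twins Y m m'.

Lemma swap_preserves_classes : preserves_classes (swap m m') (vsetU Y (vset1 m)).
Proof.
  destruct Htw as (Ym & Ym' & Hmm').
  assert (Hfix : forall z, Y z -> swap m m' z = z)
    by (intros z Yz; apply swap_other; intro; subst; contradiction).
  intros p q [Yp | ->] [Yq | ->] pq.
  - rewrite !Hfix; auto. apply R_refl; auto.
  - rewrite swap_l, Hfix; auto. apply Hmm'; auto.
  - rewrite swap_l, Hfix; auto. apply Hmm'; auto.
  - contradiction.
Qed.

Lemma vpreim_swap_twins :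
  vpreim (swap m m') (vsetU Y (vset1 m)) = vsetU Y (vset1 m').
Proof.
  destruct Htw as (Ym & Ym' & _).
  rewrite vpreimU, vpreim_swap_out, vpreim_swap1; auto.
Qed.

Lemma twins_prime : is_prime R (vsetU Y (vset1 m)) -> is_prime R (vsetU Y (vset1 m')).
Proof.
  intro HP. rewrite <- vpreim_swap_twins.
  apply prime_vpreim; auto using swap_involutive, swap_preserves_classes.
Qed.

Lemma twins_module N :
  is_module R (vsetU Y (vset1 m)) N ->
  is_module R (vsetU Y (vset1 m')) (vpreim (swap m m') N).
Proof.
  intro HN. rewrite <- vpreim_swap_twins.
  apply module_vpreim; auto using swap_involutive, swap_preserves_classes.
Qed.

End Twins.

Lemma twins_Inside (X : vset T) m m' : twins X m m' -> Inside R X m -> Inside R X m'.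
Proof.
  intros Htw [_ HX]. pose proof (twins_module _ _ _ Htw _ HX) as H.
  destruct Htw as (Xm & Xm' & _).
  rewrite vpreim_swap_out in H; auto. split; auto.
Qed.

Lemma twins_Xalpha (X : vset T) a m m' :
  X a -> twins X m m' -> Xalpha R X a m -> Xalpha R X a m'.
Proof.
  intros Xa Htw [_ Ha]. pose proof (twins_module _ _ _ Htw _ Ha) as H.
  destruct Htw as (Xm & Xm' & _).
  change (vset2 a m) with (vsetU (vset1 a) (vset1 m)) in H.
  rewrite vpreimU, vpreim_swap1, vpreim_swap_out in H;
    unfold vset1; try (intro; subst; contradiction).
  split; auto.
Qed.

Lemma twins_outside_edge (X : vset T) x y v :
  twins (vsetU X (vset1 v)) x y -> outside_edge R X x v -> outside_edge R X y v.
Proof.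
  intros Htw (_ & Xv & _ & HP). pose proof Htw as (_ & Hy & _).
  unfold vsetU, vset1 in Hy.
  split; [|split; [|split]]; try tauto.
  rewrite vsetU_vset2 in *. exact (twins_prime _ _ _ Htw HP).
Qed.

Definition pair_class (a b : T) : T -> T -> Prop := fun x y => x <> y /\ R x y a b.

Lemma pair_class_is_class a b : a <> b -> is_class R (pair_class a b).
Proof. intro ab. exists a, b. split; auto. intros; unfold pair_class; tauto. Qed.

Lemma twins_Inside_ef (X : vset T) a0 m m' :
  X a0 -> Inside R X m -> twins X m m' ->
  Inside_ef R X (pair_class m a0) (pair_class a0 m) m'.
Proof.
  intros Xa0 Hm Htw. split; [apply (twins_Inside X m); auto|].
  destruct Htw as (Xm & Xm' & Hmm').
  intros al Xal. destruct (Hmm' al Xal) as [H1 H2].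
  destruct (proj2 (proj2 Hm) al a0 m Xal Xa0 (or_intror eq_refl) Xm) as [I1 I2].
  assert (m'al : m' <> al) by (intro; subst; contradiction).
  assert (mal : m <> al) by (intro; subst; contradiction).
  assert (ma0 : m <> a0) by (intro; subst; contradiction).
  split; split; auto using not_eq_sym.
  - apply R_trans with m al; auto using R_sym.
  - apply R_trans with al m; auto using R_sym, not_eq_sym.
Qed.

Lemma twins_Xalpha_ef (X : vset T) a m m' :
  X a -> Xalpha R X a m -> twins X m m' ->
  Xalpha_ef R X (pair_class m a) (pair_class a m) a m'.
Proof.
  intros Xa Hm Htw. split; [apply (twins_Xalpha X a m); auto|].
  destruct Htw as (Xm & Xm' & Hmm'). destruct (Hmm' a Xa) as [H1 H2].
  assert (m'a : m' <> a) by (intro; subst; contradiction).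
  assert (ma : m <> a) by (intro; subst; contradiction).
  split; split; auto using R_sym, not_eq_sym.
Qed.

Lemma blocks_of_twins (X : vset T) m :
  is_prime R X -> (forall v, ~ X v -> ~ is_prime R (vsetU X (vset1 v))) -> ~ X m ->
  exists Bp Bq, in_p R X Bp /\ in_q R X Bq /\
    (forall m', twins X m m' -> Bq m') /\ vsubset Bq Bp.
Proof.
  intros HX S1 Xm. pose proof (twins_refl X m Xm) as Hmm.
  destruct (outside_vertex_cases X m HX Xm (S1 m Xm)) as [Hin | [a [Xa Hxa]]].
  - destruct HX as [[a0 [_ [_ (Xa0 & _)]]] _].
    assert (ma0 : m <> a0) by (intro; subst; contradiction).
    exists (Inside R X), (Inside_ef R X (pair_class m a0) (pair_class a0 m)).
    split; [|split; [|split]].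
    + split; [exists m; exact Hin | right; left; intro; tauto].
    + split; [exists m; apply twins_Inside_ef; auto|].
      right; left. exists (pair_class m a0), (pair_class a0 m).
      split; [|split]; auto using pair_class_is_class. intro; tauto.
    + intros m' Hm'. apply twins_Inside_ef; auto.
    + intros z [Hz _]; exact Hz.
  - assert (ma : m <> a) by (intro; subst; contradiction).
    exists (Xalpha R X a), (Xalpha_ef R X (pair_class m a) (pair_class a m) a).
    split; [|split; [|split]].
    + split; [exists m; exact Hxa | right; right; exists a; split; auto; intro; tauto].
    + split; [exists m; apply twins_Xalpha_ef; auto|].
      right; right. exists (pair_class m a), (pair_class a m), a.
      split; [|split; [|split]]; auto using pair_class_is_class. intro; tauto.
    + intros m' Hm'. apply twins_Xalpha_ef; auto.
    + intros z [Hz _]; exact Hz.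
Qed.

End TwoStructure.

Theorem lemma2p5 (T : Type) (R : T -> T -> T -> T -> Prop) (X M : vset T) :
  two_structure R ->
  (exists v, ~ X v) ->
  is_prime R X ->
  (forall v, ~ X v -> ~ is_prime R (vsetU X (vset1 v))) ->
  vsubset M (vcompl X) ->
  is_module R (fun _ => True) M ->
  graph_module R X M /\
  exists Bp Bq, in_p R X Bp /\ in_q R X Bq /\
    vsubset M Bq /\ vsubset Bq Bp /\ is_module R Bp M.
Proof.
  intros HR [v0 Xv0] HX S1 HMX HM.
  assert (HXM : forall w, X w -> ~ M w) by (intros w Xw Mw; exact (HMX w Mw Xw)).
  split.
  - split; auto. intros x y v Mx My Xv Mv.
    assert (HXvM : forall w, vsetU X (vset1 v) w -> ~ M w)
      by (intros w [Xw | ->]; auto).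
    split; apply (twins_outside_edge _ _ HR); eapply module_twins; eauto.
  - assert (Hm : exists m, ~ X m /\ forall m', M m' -> twins _ R X m m').
    { destruct (classic (exists m, M m)) as [[m Mm] | HM0].
      - exists m. split; [apply HMX; auto | intros; eapply module_twins; eauto].
      - exists v0. split; auto. intros m' Mm'. exfalso; eauto. }
    destruct Hm as [m [Xm Htw]].
    destruct (blocks_of_twins _ _ HR X m HX S1 Xm) as (Bp & Bq & Hp & Hq & HBq & HqBp).
    exists Bp, Bq. split; [|split; [|split; [|split]]]; auto.
    + intros z Mz; auto.
    + apply (module_sub _ _ (fun _ => True)); [exact HM | intros z _; exact I |].
      intros z Mz; auto.
Qed.
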